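(* Let $m,n\ge2$. If $f\in\operatorname{vert}(\Diamond_m,\Diamond_n)$ and $f(0)$ lies in the interior of $\Diamond_n$, then $f(0)=0$.
   Context: For convex polytopes $P,Q$, $\operatorname{Hom}(P,Q)$ is the set of maps $P\to Q$ that are restrictions of affine maps $\operatorname{Aff}(P)\to\operatorname{Aff}(Q)$; it is a convex polytope in the affine space of affine maps $\operatorname{Aff}(P)\to\operatorname{Aff}(Q)$, and $\operatorname{vert}(P,Q)$ denotes its set of vertices. $\Diamond_n=\operatorname{conv}(\pm e_1,\ldots,\pm e_n)\subset\mathbb{R}^n$ is the $n$-dimensional crosspolytope. *)

From HB Require Import structures.
From mathcomp Require Import all_boot all_order all_algebra.
From mathcomp Require Import reals.
Set Implicit Arguments. Unset Strict Implicit. Unset Printing Implicit Defensive.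
Import Order.TTheory GRing.Theory Num.Theory.
Local Open Scope ring_scope.

Section Defs.
Variable R : realType.

Definition unitvec (n : nat) (i : 'I_n) : 'cV[R]_n := delta_mx i 0.

(* x lies in the crosspolytope conv(±e_1,...,±e_n): an explicit convex combination *)
Definition in_cross (n : nat) (x : 'cV[R]_n) : Prop :=
  exists (lp ln : 'I_n -> R),
    (forall i, 0 <= lp i) /\ (forall i, 0 <= ln i) /\
    \sum_(i < n) (lp i + ln i) = 1 /\
    x = \sum_(i < n) (lp i *: unitvec i + ln i *: (- unitvec i)).

(* topological interior in R^n (product topology: sup-norm ball) *)
Definition in_cross_interior (n : nat) (x : 'cV[R]_n) : Prop :=
  exists e : R, 0 < e /\
    forall y : 'cV[R]_n, (forall i, `|y i 0 - x i 0| < e) -> in_cross y.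

(* The affine map x |-> A x + b (Aff(Diamond_m) = R^m) lies in Hom(Diamond_m, Diamond_n) *)
Definition in_hom (m n : nat) (A : 'M[R]_(n, m)) (b : 'cV[R]_n) : Prop :=
  forall x : 'cV[R]_m, in_cross x -> in_cross (A *m x + b).

Definition is_vert_hom (m n : nat) (A : 'M[R]_(n, m)) (b : 'cV[R]_n) : Prop :=
  in_hom A b /\
  forall (A1 A2 : 'M[R]_(n, m)) (b1 b2 : 'cV[R]_n) (t : R),
    in_hom A1 b1 -> in_hom A2 b2 -> 0 < t -> t < 1 ->
    A = t *: A1 + (1 - t) *: A2 -> b = t *: b1 + (1 - t) *: b2 ->
    A1 = A2 /\ b1 = b2.

End Defs.

(* A map x |-> A x + b sends the crosspolytope into itself iff b + A e_j and
   b - A e_j lie in the unit l1-ball for every j.  When |b|_1 < 1, each such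
   pair p, q has |p + q|_1 < 2, and then p and q can be moved linearly in d
   inside the ball so that their sum becomes (1 + d)(p + q): if one of them
   has norm < 1 it absorbs the whole motion, otherwise mass is traded between
   coordinates where p and q have opposite signs.  Doing this for all columns
   gives maps (A + d D, (1 + d) b) in Hom for all small |d|; the maps for d = e
   and d = -e have midpoint (A, b), so at a vertex they coincide and e b = 0. *)

From HB Require Import structures.
From mathcomp Require Import all_boot all_order all_algebra.
From mathcomp Require Import reals.
From mathcomp Require Import ring lra.
Import Order.TTheory GRing.Theory Num.Theory.
Local Open Scope ring_scope.
Set Implicit Arguments. Unset Strict Implicit. Unset Printing Implicit Defensive.

Section Scalar.
Variable R : realDomainType.
Implicit Types x y d g : R.

Lemma sgrD_mul_norm_defect x y :
  (Num.sg x + Num.sg y) * (`|x| + `|y| - `|x + y|) = 0.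
Proof.
case: (ltrgtP x 0) => hx; last by rewrite hx normr0 !add0r subrr mulr0.
all: case: (ltrgtP y 0) => hy; last by rewrite hy normr0 !addr0 subrr mulr0.
- by rewrite !ltr0_norm ?subrr ?mulr0 //; lra.
- by rewrite (ltr0_sg hx) (gtr0_sg hy) addNr mul0r.
- by rewrite (gtr0_sg hx) (ltr0_sg hy) addrN mul0r.
- by rewrite !gtr0_norm ?subrr ?mulr0 //; lra.
Qed.

Lemma norm_scale_sub_sg d g x : -1 <= d -> 0 <= g -> d * g <= `|x| ->
  `|(1 + d) * x - d * (Num.sg x * g)| <= (1 + d) * `|x| - d * g.
Proof.
move=> hd hg hdg; case: (ltrgtP x 0) => hx.
- rewrite (ltr0_sg hx) ltr0_norm // in hdg *.
  by rewrite ler0_norm; nra.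
- rewrite (gtr0_sg hx) gtr0_norm // in hdg *.
  by rewrite ger0_norm; nra.
- by rewrite hx sgr0 normr0 in hdg *; rewrite !(mulr0, mul0r) subrr normr0; lra.
Qed.
End Scalar.

Section L1norm.
Variables (R : realFieldType) (n : nat).
Implicit Types (x y p q u : 'cV[R]_n) (d : R).

Definition l1norm x := \sum_i `|x i 0|.

Lemma l1norm_ge0 x : 0 <= l1norm x.
Proof. exact: sumr_ge0. Qed.

Lemma l1normD x y : l1norm (x + y) <= l1norm x + l1norm y.
Proof. by rewrite -big_split; apply: ler_sum => i _; rewrite mxE ler_normD. Qed.

Lemma l1normZ (a : R) x : l1norm (a *: x) = `|a| * l1norm x.
Proof. by rewrite mulr_sumr; apply: eq_bigr => i _; rewrite mxE normrM. Qed.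

Lemma l1normN x : l1norm (- x) = l1norm x.
Proof. by apply: eq_bigr => i _; rewrite mxE normrN. Qed.

Lemma l1norm_sum {I : finType} (f : I -> 'cV[R]_n) :
  l1norm (\sum_i f i) <= \sum_i l1norm (f i).
Proof.
rewrite /l1norm exchange_big /=; apply: ler_sum => k _.
by rewrite summxE; apply: ler_norm_sum.
Qed.

Lemma l1norm_comb {I : finType} (lp ln : I -> R) (y z : I -> 'cV[R]_n) :
  (forall i, 0 <= lp i) -> (forall i, 0 <= ln i) -> \sum_i (lp i + ln i) = 1 ->
  (forall i, l1norm (y i) <= 1 /\ l1norm (z i) <= 1) ->
  l1norm (\sum_i (lp i *: y i + ln i *: z i)) <= 1.
Proof.
move=> lp0 ln0 sum1 yz1; rewrite -sum1.
apply: le_trans (l1norm_sum _) _.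
apply: ler_sum => i _; apply: le_trans (l1normD _ _) _.
rewrite !l1normZ !ger0_norm //; have [y1 z1] := yz1 i.
by apply: lerD; rewrite -[leRHS]mulr1 ler_wpM2l.
Qed.

Lemma l1norm_sg_shift (g : 'I_n -> R) d x :
  (forall k, 0 <= g k) -> \sum_k g k = 1 -> -1 <= d ->
  (forall k, d * g k <= `|x k 0|) -> l1norm x <= 1 ->
  l1norm ((1 + d) *: x - d *: \col_k (Num.sg (x k 0) * g k)) <= 1.
Proof.
move=> g0 g1 hd hdg x1.
apply: le_trans (_ : \sum_k ((1 + d) * `|x k 0| - d * g k) <= _).
  by apply: ler_sum => k _; rewrite !mxE; apply: norm_scale_sub_sg.
rewrite sumrB -!mulr_sumr g1 -/(l1norm x); nra.
Qed.

(* The motions are chosen so that the sum of the two points becomes (1 + d) (p + q). *)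
Definition l1_splittable p q := exists2 eps : R, 0 < eps & exists u,
  forall d, `|d| <= eps -> l1norm (p + d *: u) <= 1 /\ l1norm (q + d *: (p + q - u)) <= 1.

Lemma l1_splittable_sym p q : l1_splittable p q -> l1_splittable q p.
Proof.
case=> eps eps0 [u hu]; exists eps => //; exists (p + q - u) => d /hu[hp hq].
by rewrite (addrC q p) subKr.
Qed.

Lemma l1_splittable_lt1 p q :
  l1norm p < 1 -> l1norm q <= 1 -> l1norm (p + q) <= 2 -> l1_splittable p q.
Proof.
move=> p1 q1 pq2; exists ((1 - l1norm p) / 2); first lra.
exists (p + q) => d hd; rewrite subrr scaler0 addr0; split => //.
apply: le_trans (l1normD _ _) _; rewrite l1normZ.
have := l1norm_ge0 (p + q); nra.
Qed.

Lemma l1_splittable_defect p q :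
  l1norm p <= 1 -> l1norm q <= 1 -> 0 < l1norm p + l1norm q - l1norm (p + q) ->
  l1_splittable p q.
Proof.
move=> p1 q1; set D := l1norm p + l1norm q - l1norm (p + q) => D0.
(* [defect k] vanishes unless [p k 0] and [q k 0] have opposite signs; the mass
   [g], of total 1, is moved between p and q on exactly those coordinates. *)
pose defect k := `|p k 0| + `|q k 0| - `|p k 0 + q k 0|.
pose g k := defect k / D.
have sumD : \sum_k defect k = D by rewrite /D /l1norm -big_split -sumrB;
  apply: eq_bigr => k _; rewrite mxE.
have g0 k : 0 <= g k by rewrite divr_ge0 ?(ltW D0) // subr_ge0 ler_normD.
have g1 : \sum_k g k = 1 by rewrite -mulr_suml sumD divff ?gt_eqF.
have defect_le k : defect k <= 2 * `|p k 0| /\ defect k <= 2 * `|q k 0|.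
  have := ler_normD (p k 0 + q k 0) (- q k 0); have := ler_normD (p k 0 + q k 0) (- p k 0).
  rewrite addrK addrAC subrr add0r !normrN /defect; lra.
have sg_pq k : Num.sg (p k 0) * g k = - (Num.sg (q k 0) * g k).
  by apply/eqP; rewrite -addr_eq0 -mulrDl /g mulrA sgrD_mul_norm_defect mul0r.
exists (Num.min (D / 2) 1); first by rewrite lt_min ltr01 andbT divr_gt0.
exists (p - \col_k (Num.sg (p k 0) * g k)) => d.
rewrite le_min !ler_norml => /andP[/andP[_ dD] /andP[hd _]].
have dg k : d * g k <= (D / 2) * g k by apply: ler_wpM2r.
have gD k : D / 2 * g k = defect k / 2 by rewrite /g; field; rewrite gt_eqF.
split.
- have -> : p + d *: (p - \col_k (Num.sg (p k 0) * g k)) =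
    (1 + d) *: p - d *: \col_k (Num.sg (p k 0) * g k).
    by rewrite scalerBr scalerDl scale1r addrA.
  apply: l1norm_sg_shift => // k.
  by apply: le_trans (dg k) _; rewrite gD; have := defect_le k; lra.
- have -> : q + d *: (p + q - (p - \col_k (Num.sg (p k 0) * g k))) =
    (1 + d) *: q - d *: \col_k (Num.sg (q k 0) * g k).
    apply/matrixP => k j; rewrite (ord1 j) !mxE sg_pq; ring.
  apply: l1norm_sg_shift => // k.
  by apply: le_trans (dg k) _; rewrite gD; have := defect_le k; lra.
Qed.

Lemma l1_splittableP p q :
  l1norm p <= 1 -> l1norm q <= 1 -> l1norm (p + q) < 2 -> l1_splittable p q.
Proof.
move=> p1 q1 pq2.
have [p_lt1|p_ge1] := ltP (l1norm p) 1; first exact: l1_splittable_lt1 (ltW pq2).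
have [q_lt1|q_ge1] := ltP (l1norm q) 1.
  by apply: l1_splittable_sym; apply: l1_splittable_lt1 => //; rewrite addrC ltW.
by apply: l1_splittable_defect => //; lra.
Qed.

End L1norm.

Section Crosspolytope.
Variable R : realType.

Lemma l1norm_unitvec n (i : 'I_n) : l1norm (unitvec R i) = 1.
Proof.
rewrite /l1norm (bigD1 i) //= big1 => [|k /negbTE ki]; rewrite mxE ?ki ?normr0 //.
by rewrite !eqxx normr1 addr0.
Qed.

Lemma cross_combE n (a c : 'I_n -> R) :
  \sum_i (a i *: unitvec R i + c i *: - unitvec R i) = \col_k (a k - c k).
Proof.
apply/matrixP => k j; rewrite (ord1 j) summxE !mxE (bigD1 k) //= big1 => [|i ik].
  by rewrite !mxE !eqxx mulr1 mulrN1 addr0.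
by rewrite !mxE eq_sym (negbTE ik) mulr0n oppr0 !mulr0 addr0.
Qed.

Lemma in_cross_l1norm n (x : 'cV[R]_n) : in_cross x -> l1norm x <= 1.
Proof.
case=> lp [ln [lp0 [ln0 [sum1 ->]]]].
apply: l1norm_comb => // i; rewrite l1normN l1norm_unitvec; lra.
Qed.

Lemma l1norm_in_cross n (x : 'cV[R]_n) : (0 < n)%N -> l1norm x <= 1 -> in_cross x.
Proof.
(* The slack [1 - l1norm x] is spread evenly over all 2n weights. *)
move=> n0 x1; pose s := (1 - l1norm x) / (2 * n%:R).
have s0 : 0 <= s by rewrite divr_ge0 ?subr_ge0 // mulr_ge0 // ler0n.
have xpos k : 0 <= `|x k 0| + x k 0 by have := ler_norm (- x k 0); rewrite normrN; lra.
have xneg k : 0 <= `|x k 0| - x k 0 by have := ler_norm (x k 0); lra.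
exists (fun k => (`|x k 0| + x k 0) / 2 + s), (fun k => (`|x k 0| - x k 0) / 2 + s).
split; first by move=> k; apply: addr_ge0 => //; apply: divr_ge0.
split; first by move=> k; apply: addr_ge0 => //; apply: divr_ge0.
split; last by rewrite cross_combE; apply/matrixP => k j; rewrite (ord1 j) mxE; field.
rewrite (eq_bigr (fun k => `|x k 0| + s *+ 2)) => [|k _]; last by rewrite mulr2n; field.
rewrite big_split sumr_const card_ord /= -/(l1norm x) /s -mulrnA -[X in _ + X]mulr_natr natrM.
by field; rewrite pnatr_eq0 -lt0n.
Qed.

Lemma in_hom_cols m n (A : 'M[R]_(n, m)) (b : 'cV[R]_n) (j : 'I_m) :
  in_hom A b -> l1norm (b + col j A) <= 1 /\ l1norm (b - col j A) <= 1.
Proof.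
move=> hAb; have m0 : (0 < m)%N := leq_ltn_trans (leq0n j) (ltn_ord j).
have e1 : in_cross (unitvec R j) by apply: l1norm_in_cross; rewrite ?l1norm_unitvec.
have e2 : in_cross (- unitvec R j).
  by apply: l1norm_in_cross; rewrite ?l1normN ?l1norm_unitvec.
split; apply: in_cross_l1norm.
  by have := hAb _ e1; rewrite /unitvec -colE addrC.
by have := hAb _ e2; rewrite /unitvec mulmxN -colE addrC.
Qed.

Lemma cols_in_hom m n (A : 'M[R]_(n, m)) (b : 'cV[R]_n) : (0 < n)%N ->
  (forall j, l1norm (b + col j A) <= 1 /\ l1norm (b - col j A) <= 1) -> in_hom A b.
Proof.
move=> n0 hcol x [lp [ln [lp0 [ln0 [sum1 ->]]]]]; apply: l1norm_in_cross => //.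
have -> : A *m (\sum_i (lp i *: unitvec R i + ln i *: - unitvec R i)) + b =
    \sum_i (lp i *: (b + col i A) + ln i *: (b - col i A)).
  have -> : \sum_i (lp i *: (b + col i A) + ln i *: (b - col i A)) =
      \sum_i (lp i *: col i A - ln i *: col i A) + \sum_i (lp i + ln i) *: b.
    by rewrite -big_split; apply: eq_bigr => i _; apply/matrixP => k l; rewrite !mxE; ring.
  rewrite -scaler_suml sum1 scale1r mulmx_sumr; congr (_ + _); apply: eq_bigr => i _.
  by rewrite mulmxDr -!scalemxAr mulmxN /unitvec -colE scalerN.
by apply: l1norm_comb.
Qed.

Lemma in_cross_interior_l1norm_lt1 n (b : 'cV[R]_n) : in_cross_interior b -> l1norm b < 1.
Proof.
case=> e [e0 he]; have b1 : l1norm b <= 1 by apply/in_cross_l1norm/he => i; rewrite subrr normr0.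
have /in_cross_l1norm : in_cross ((1 + e / 2) *: b).
  apply: he => i; rewrite mxE mulrDl mul1r addrAC subrr add0r normrM.
  have bi : `|b i 0| <= 1 by apply: le_trans b1; rewrite /l1norm (bigD1 i) //= lerDl sumr_ge0.
  rewrite ger0_norm ?divr_ge0 ?ltW //; nra.
rewrite l1normZ ger0_norm; last by lra.
have := l1norm_ge0 b; nra.
Qed.

Lemma in_hom_perturb m n (A : 'M[R]_(n, m)) (b : 'cV[R]_n) :
  (0 < n)%N -> in_hom A b -> l1norm b < 1 ->
  exists2 eps : R, 0 < eps & exists D : 'M[R]_(n, m),
    forall d, `|d| <= eps -> in_hom (A + d *: D) ((1 + d) *: b).
Proof.
move=> n0 hAb b1.
have split_col j : l1_splittable (b + col j A) (b - col j A).
  have [h1 h2] := in_hom_cols j hAb; apply: l1_splittableP => //.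
  have -> : b + col j A + (b - col j A) = 2%:R *: b.
    by apply/matrixP => k l; rewrite !mxE; ring.
  by rewrite l1normZ normr_nat; lra.
have [eps eps0 /fin_all_exists[u hu]] := fin_all_exists2 split_col.
pose e := \big[Num.min/1]_j eps j.
have e_le j : e <= eps j by rewrite /e (bigD1 j) //= ge_min lexx.
exists e; first by apply: (big_ind (fun x => 0 < x)) => // x y; rewrite lt_min => ->.
exists (\matrix_(k, j) (u j - b) k 0) => d hd; apply: cols_in_hom => // j.
have [h1 h2] := hu j d (le_trans hd (e_le j)).
split; [move: h1 | move: h2]; congr (l1norm _ <= 1);
  by apply/matrixP => k l; rewrite (ord1 l) !mxE; ring.
Qed.

End Crosspolytope.

Theorem theorem6p1 (R : realType) (m n : nat) (hm : (2 <= m)%N) (hn : (2 <= n)%N)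
  (A : 'M[R]_(n, m)) (b : 'cV[R]_n) :
  is_vert_hom A b -> in_cross_interior b -> b = 0.
Proof.
move=> [hAb hvert] /in_cross_interior_l1norm_lt1 b1.
have [eps eps0 [D hD]] := in_hom_perturb (ltnW hn) hAb b1.
have [_ /eqP] : A + eps *: D = A + (- eps) *: D /\ (1 + eps) *: b = (1 + - eps) *: b.
  apply: (hvert _ _ _ _ (1 / 2)).
  - by apply: hD; rewrite gtr0_norm.
  - by apply: hD; rewrite normrN gtr0_norm.
  - lra.
  - lra.
  - by apply/matrixP => i k; rewrite !mxE; field.
  - by apply/matrixP => i k; rewrite !mxE; field.
rewrite -subr_eq0 -scalerBl scaler_eq0 => /orP[/eqP coef|/eqP //].
by exfalso; lra.
Qed.
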